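(* Let $a<b<c$ be elements of $\mathcal{C}_n$. Every element $\alpha$ of the interior of the triangle $\triangle^{(n)}\{a,b,c\}$ can be written in a unique way as $\alpha=\beta+\gamma$ with $\beta\in\mathcal{STR}^{(n)}\{a,b\}$ and $\gamma\in\mathcal{STR}^{(n)}\{a,c\}$.
   Context: $\mathcal{C}_n=\{0,1,\dots,n-1\}$ with its usual order; $\widehat{\mathcal{E}}_{\mathcal{C}_n}$ is the set of all order-preserving maps $\mathcal{C}_n\to\mathcal{C}_n$ (not required to fix $0$), with addition $(\beta+\gamma)(x)=\max(\beta(x),\gamma(x))$. The triangle $\triangle^{(n)}\{a,b,c\}$ is the set of $\alpha\in\widehat{\mathcal{E}}_{\mathcal{C}_n}$ with image contained in $\{a,b,c\}$; the string $\mathcal{STR}^{(n)}\{x,y\}$ (for $x<y$) is the set of $\alpha\in\widehat{\mathcal{E}}_{\mathcal{C}_n}$ with image contained in $\{x,y\}$. The interior of the triangle is the set of its elements not lying in any of the strings $\mathcal{STR}^{(n)}\{a,b\}$, $\mathcal{STR}^{(n)}\{a,c\}$, $\mathcal{STR}^{(n)}\{b,c\}$, i.e. the $\alpha$ with image exactly $\{a,b,c\}$. *)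

From mathcomp Require Import all_boot.
Set Implicit Arguments. Unset Strict Implicit. Unset Printing Implicit Defensive.

(* C_n = 'I_n = {0,...,n-1} with its usual order; maps C_n -> C_n are
   finite functions {ffun 'I_n -> 'I_n}. *)

(* \hat{E}_{C_n}: all order-preserving maps C_n -> C_n (not required to fix 0). *)
Definition Ehat (n : nat) : {set {ffun 'I_n -> 'I_n}} :=
  [set f : {ffun 'I_n -> 'I_n} | [forall x : 'I_n, forall y : 'I_n, (x <= y) ==> (f x <= f y)]].

Definition addE (n : nat) (f g : {ffun 'I_n -> 'I_n}) : {ffun 'I_n -> 'I_n} :=
  [ffun x => if f x <= g x then g x else f x].

Definition img (n : nat) (f : {ffun 'I_n -> 'I_n}) : {set 'I_n} :=
  [set f x | x in 'I_n].

Definition triangle (n : nat) (a b c : 'I_n) : {set {ffun 'I_n -> 'I_n}} :=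
  [set f in Ehat n | img f \subset [set a; b; c]].

Definition STR (n : nat) (x y : 'I_n) : {set {ffun 'I_n -> 'I_n}} :=
  [set f in Ehat n | img f \subset [set x; y]].

(* interior of the triangle: elements of the triangle lying in none of the
   three strings (equivalently, image exactly {a,b,c}) *)
Definition triangle_interior (n : nat) (a b c : 'I_n) : {set {ffun 'I_n -> 'I_n}} :=
  [set f in triangle a b c | (f \notin STR a b) && (f \notin STR a c) && (f \notin STR b c)].

(* Post-compose alpha with the monotone maps [cap b] (x |-> min x b) and
   [sink a b] (values <= b go to a): on {a,b,c} they land in {a,b} and {a,c}
   and their pointwise maximum is the identity, which gives existence.
   Uniqueness: the {a,c}-component is read off alpha directly, and so is the
   {a,b}-component except where alpha = c; there it must be b, because an
   interior alpha takes the value b at some earlier point, where the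
   {a,b}-component is already b. *)

From mathcomp Require Import all_boot.
From mathcomp Require Import zify.

Set Implicit Arguments.
Unset Strict Implicit.
Unset Printing Implicit Defensive.

Section Strings.

Variable n : nat.
Implicit Types (f g alpha beta gamma : {ffun 'I_n -> 'I_n}) (a b c x y : 'I_n).

Lemma EhatP f :
  reflect {homo f : x y / (x <= y)%N} (f \in Ehat n).
Proof.
rewrite inE; apply: (iffP forallP) => [mono x y le_xy | mono x].
  exact: implyP (forallP (mono x) y) le_xy.
by apply/forallP => y; apply/implyP; apply: mono.
Qed.

Lemma mem_img f z : f z \in img f.
Proof. exact: imset_f. Qed.

Lemma STRP x y f :
  reflect (f \in Ehat n /\ forall z, f z = x \/ f z = y) (f \in STR x y).
Proof.
rewrite [f \in STR x y]inE; apply: (iffP andP) => -[f_mono f_val]; split => //.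
  by move=> z; have /subsetP/(_ _ (mem_img f z)) := f_val;
     rewrite in_set2 => /orP[] /eqP; [left | right].
apply/subsetP => _ /imsetP[z _ ->]; rewrite in_set2.
by case: (f_val z) => ->; rewrite eqxx ?orbT.
Qed.

Lemma triangle_val a b c f :
  f \in triangle a b c -> forall z, [\/ f z = a, f z = b | f z = c].
Proof.
rewrite inE => /andP[_ /subsetP f_val] z.
have := f_val _ (mem_img f z); rewrite !inE -orbA.
by case/or3P => /eqP; [apply: Or31 | apply: Or32 | apply: Or33].
Qed.

Lemma triangle_Ehat a b c f : f \in triangle a b c -> f \in Ehat n.
Proof. by rewrite [f \in _]inE => /andP[]. Qed.

Lemma triangle_interior_triangle a b c f :
  f \in triangle_interior a b c -> f \in triangle a b c.
Proof. by rewrite [f \in _]inE => /andP[]. Qed.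

Lemma addE_val f g x : addE f g x = maxn (f x) (g x) :> nat.
Proof. by rewrite ffunE /maxn; case: ltngtP => [||/ord_inj ->]. Qed.

Lemma addE_Ehat f g : f \in Ehat n -> g \in Ehat n -> addE f g \in Ehat n.
Proof.
move=> /EhatP f_mono /EhatP g_mono; apply/EhatP => x y le_xy.
have := f_mono _ _ le_xy; have := g_mono _ _ le_xy.
by rewrite !addE_val; lia.
Qed.

Lemma Ehat_comp (h : 'I_n -> 'I_n) f :
  {homo h : x y / (x <= y)%N} -> f \in Ehat n -> [ffun z => h (f z)] \in Ehat n.
Proof.
by move=> h_mono /EhatP f_mono; apply/EhatP => x y le_xy; rewrite !ffunE;
   apply/h_mono/f_mono.
Qed.

Definition cap b x : 'I_n := if (x <= b)%N then x else b.

Definition sink a b x : 'I_n := if (x <= b)%N then a else x.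

Lemma cap_homo b : {homo cap b : x y / (x <= y)%N}.
Proof. by move=> x y; rewrite /cap; case: ifP; case: ifP; lia. Qed.

Lemma sink_homo a b : (a <= b)%N -> {homo sink a b : x y / (x <= y)%N}.
Proof. by move=> le_ab x y; rewrite /sink; case: ifP; case: ifP; lia. Qed.

Section Triangle.

Variables a b c : 'I_n.
Hypotheses (lt_ab : (a < b)%N) (lt_bc : (b < c)%N).

Definition triangle_fst alpha : {ffun 'I_n -> 'I_n} := [ffun z => cap b (alpha z)].

Definition triangle_snd alpha : {ffun 'I_n -> 'I_n} := [ffun z => sink a b (alpha z)].

Lemma triangle_fst_STR alpha :
  alpha \in triangle a b c -> triangle_fst alpha \in STR a b.
Proof.
move=> alpha_tri; apply/STRP; split.
  exact: Ehat_comp (cap_homo b) (triangle_Ehat alpha_tri).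
move=> z; rewrite ffunE /cap.
by case: (triangle_val alpha_tri z) => ->; case: ifP; auto; lia.
Qed.

Lemma triangle_snd_STR alpha :
  alpha \in triangle a b c -> triangle_snd alpha \in STR a c.
Proof.
move=> alpha_tri; apply/STRP; split.
  exact: Ehat_comp (sink_homo (ltnW lt_ab)) (triangle_Ehat alpha_tri).
move=> z; rewrite ffunE /sink.
by case: (triangle_val alpha_tri z) => ->; case: ifP; auto; lia.
Qed.

Lemma triangle_decomposition alpha :
  alpha \in triangle a b c ->
  [/\ triangle_fst alpha \in STR a b, triangle_snd alpha \in STR a c
     & alpha = addE (triangle_fst alpha) (triangle_snd alpha)].
Proof.
move=> alpha_tri; split; [exact: triangle_fst_STR | exact: triangle_snd_STR |].
apply/ffunP => z; apply: ord_inj; rewrite addE_val !ffunE /cap /sink.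
by case: (triangle_val alpha_tri z) => ->; case: ifP; lia.
Qed.

Lemma addE_STR_snd beta gamma :
  beta \in STR a b -> gamma \in STR a c ->
  gamma = triangle_snd (addE beta gamma).
Proof.
move=> /STRP[_ beta_val] /STRP[_ gamma_val]; apply/ffunP => z; apply: ord_inj.
rewrite ffunE /sink; case: ifP; rewrite addE_val;
  by case: (beta_val z) => ->; case: (gamma_val z) => -> /=; lia.
Qed.

Lemma addE_STR_fst beta gamma y :
  beta \in STR a b -> gamma \in STR a c -> addE beta gamma y = b ->
  beta = triangle_fst (addE beta gamma).
Proof.
move=> beta_STR gamma_STR alpha_y.
have /STRP[beta_mono beta_val] := beta_STR.
have /STRP[gamma_mono gamma_val] := gamma_STR.
have /EhatP alpha_mono := addE_Ehat beta_mono gamma_mono.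
have beta_y : beta y = b.
  apply: ord_inj; move/(congr1 (@nat_of_ord n)): alpha_y; rewrite addE_val.
  by case: (beta_val y) => ->; case: (gamma_val y) => -> /=; lia.
apply/ffunP => z; apply: ord_inj.
have := alpha_mono z y; have /EhatP/(_ y z) := beta_mono.
rewrite [triangle_fst _ _]ffunE /cap (fun_if (@nat_of_ord n)) alpha_y beta_y !addE_val.
by case: (beta_val z) => ->; case: (gamma_val z) => -> /=; case: ifP; lia.
Qed.

Lemma triangle_interior_hit_b alpha :
  alpha \in triangle_interior a b c -> exists y, alpha y = b.
Proof.
move=> alpha_int; have alpha_tri := triangle_interior_triangle alpha_int.
move: alpha_int; rewrite [_ \in _]inE => /andP[_ /andP[/andP[_ not_STR_ac] _]].
apply/exists_eqP; apply: contraR not_STR_ac => /existsPn no_b.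
apply/STRP; split => [|z]; first exact: triangle_Ehat alpha_tri.
by case: (triangle_val alpha_tri z); auto => /eqP; rewrite (negbTE (no_b z)).
Qed.

End Triangle.

End Strings.

Theorem proposition21 (n : nat) (a b c : 'I_n) :
  a < b -> b < c ->
  forall alpha, alpha \in triangle_interior a b c ->
    exists beta gamma,
      [/\ beta \in STR a b, gamma \in STR a c & alpha = addE beta gamma] /\
      (forall beta' gamma', beta' \in STR a b -> gamma' \in STR a c ->
         alpha = addE beta' gamma' -> beta' = beta /\ gamma' = gamma).
Proof.
move=> lt_ab lt_bc alpha alpha_int.
have alpha_tri := triangle_interior_triangle alpha_int.
have [y alpha_y] := triangle_interior_hit_b alpha_int.
have [fst_STR snd_STR def_alpha] := triangle_decomposition lt_ab lt_bc alpha_tri.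
exists (triangle_fst b alpha), (triangle_snd a b alpha); split => //.
move=> beta gamma beta_STR gamma_STR def_alpha'; rewrite def_alpha' in alpha_y *.
have := addE_STR_fst lt_ab lt_bc beta_STR gamma_STR alpha_y.
by have := addE_STR_snd lt_ab lt_bc beta_STR gamma_STR.
Qed.
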